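(* (1) $Z(G_n)=\{e\}$. (2) $Z(\mathbb{T}^n\ltimes\mathrm{Inn}(\mathbb{S}_n))=\{e\}$. (3) $Z(\mathrm{Inn}(\mathbb{S}_n))=\{e\}$. (4) $Z(S_n\ltimes\mathbb{T}^n)=\{t_{(\lambda,\dots,\lambda)}\mid\lambda\in K^*\}\simeq\mathbb{T}^1$. (5) $Z(S_n\ltimes\mathrm{Inn}(\mathbb{S}_n))=\{e\}$.
   Context: $K$ is a field of characteristic zero. $\mathbb{S}_n$ is the $K$-algebra generated by $x_1,\dots,x_n,y_1,\dots,y_n$ with defining relations $y_ix_i=1$ and $[x_i,y_j]=[x_i,x_j]=[y_i,y_j]=0$ for $i\ne j$; $G_n=\mathrm{Aut}_{K\text{-alg}}(\mathbb{S}_n)$. $\mathbb{T}^n=\{t_\lambda\}$ with $t_\lambda(x_i)=\lambda_ix_i$, $t_\lambda(y_i)=\lambda_i^{-1}y_i$; $S_n$ acts by $\tau(x_i)=x_{\tau(i)}$, $\tau(y_i)=y_{\tau(i)}$; $\mathrm{Inn}(\mathbb{S}_n)$ is the group of inner automorphisms. $Z(H)$ denotes the centre of a group $H$; all these are subgroups of $G_n$. *)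

From HB Require Import structures.
From mathcomp Require Import all_boot all_order all_algebra all_fingroup.
Set Implicit Arguments. Unset Strict Implicit. Unset Printing Implicit Defensive.
Import GRing.Theory.
Local Open Scope ring_scope.

Section Jacobson.
Variable K : fieldType.

Definition is_alg_hom (A B : algType K) (f : A -> B) : Prop :=
  (forall (k : K) (a b : A), f (k *: a + b) = k *: f a + f b) /\
  (forall a b : A, f (a * b) = f a * f b) /\ f 1 = 1.

Definition jacobson_rel (n : nat) (B : algType K) (x y : 'I_n -> B) : Prop :=
  (forall i, y i * x i = 1) /\
  (forall i j, i != j ->
     [/\ x i * y j = y j * x i, x i * x j = x j * x i & y i * y j = y j * y i]).

(* (A, x, y) is the K-algebra generated by x_i, y_i with the defining
   relations above: universal property of the presentation. *)
Definition jacobson_presentation (n : nat) (A : algType K) (x y : 'I_n -> A) : Prop :=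
  jacobson_rel x y /\
  forall (B : algType K) (u v : 'I_n -> B), jacobson_rel u v ->
    exists f : A -> B,
      [/\ is_alg_hom f, (forall i, f (x i) = u i /\ f (y i) = v i) &
          forall g : A -> B, is_alg_hom g -> (forall i, g (x i) = u i /\ g (y i) = v i) ->
            forall a, g a = f a].

Variable A : algType K.

Definition is_autom (s : A -> A) : Prop := is_alg_hom s /\ bijective s.

Definition in_torus (n : nat) (x y : 'I_n -> A) (s : A -> A) : Prop :=
  is_autom s /\ exists lam : 'I_n -> K, (forall i, lam i != 0) /\
    forall i, s (x i) = lam i *: x i /\ s (y i) = (lam i)^-1 *: y i.

Definition in_sym (n : nat) (x y : 'I_n -> A) (s : A -> A) : Prop :=
  is_autom s /\ exists p : 'S_n, forall i, s (x i) = x (p i) /\ s (y i) = y (p i).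

Definition in_inn (s : A -> A) : Prop :=
  exists u v : A, [/\ u * v = 1, v * u = 1 & forall a, s a = u * a * v].

(* Product set P Q = { p o q } (internal semidirect product as a set). *)
Definition prod_set (P Q : (A -> A) -> Prop) (s : A -> A) : Prop :=
  exists p q, [/\ P p, Q q & forall a, s a = p (q a)].

Definition in_centre (H : (A -> A) -> Prop) (s : A -> A) : Prop :=
  H s /\ forall t, H t -> forall a, s (t a) = t (s a).

Definition trivial_centre (H : (A -> A) -> Prop) : Prop :=
  forall s, in_centre H s <-> (forall a, s a = a).

End Jacobson.

From HB Require Import structures.
From mathcomp Require Import all_boot all_order all_algebra all_fingroup.
From mathcomp Require Import boolp functions.
Import GRing.Theory.
Local Open Scope ring_scope.

Set Implicit Arguments. Unset Strict Implicit. Unset Printing Implicit Defensive.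

(* S_n acts on V = {functions N^n -> K}, x_i raising and y_i lowering the i-th
   index.  Since S_n is spanned by the normal monomials x^a y^b, a leading-term
   argument shows that this representation is faithful.  The elements
   E_ab = x^a (prod_i (1 - x_i y_i)) y^b act as rank-one operators, so for a != b
   they are square-zero, their common centraliser is K, and an algebra
   endomorphism fixing all of them is the identity.  Conjugating by the units
   1 + E_ab then shows that an automorphism commuting with Inn(S_n) is the
   identity; this gives (1), (2), (3) and (5), as all these groups contain
   Inn(S_n).  For (4), a central element of S_n x| T^n fixes every index (it
   commutes with a torus element with an entry 2 != 1, by characteristic 0) and
   scales all generators alike (it commutes with the transpositions). *)

Section AlgHom.
Variables (K : fieldType) (A B : algType K) (f : A -> B).
Hypothesis hf : is_alg_hom f.

Lemma ahomD a b : f (a + b) = f a + f b.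
Proof. by case: hf => lin _; rewrite -[a]scale1r lin !scale1r. Qed.

Lemma ahom0 : f 0 = 0.
Proof. by apply: (addrI (f 0)); rewrite -ahomD !addr0. Qed.

Lemma ahomZ k a : f (k *: a) = k *: f a.
Proof. by case: hf => lin _; rewrite -[k *: a]addr0 lin ahom0 addr0. Qed.

Lemma ahomB a b : f (a - b) = f a - f b.
Proof. by rewrite ahomD -scaleN1r ahomZ scaleN1r. Qed.

Lemma ahomM a b : f (a * b) = f a * f b.
Proof. by case: hf => _ []. Qed.

Lemma ahom1 : f 1 = 1.
Proof. by case: hf => _ []. Qed.

Lemma ahom_sum I (r : seq I) (F : I -> A) :
  f (\sum_(i <- r) F i) = \sum_(i <- r) f (F i).
Proof. exact: (big_morph f ahomD ahom0). Qed.

Lemma ahom_prod I (r : seq I) (F : I -> A) :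
  f (\prod_(i <- r) F i) = \prod_(i <- r) f (F i).
Proof. exact: (big_morph f ahomM ahom1). Qed.

Lemma ahomX a k : f (a ^+ k) = f a ^+ k.
Proof. by elim: k => [|k IH]; rewrite ?expr0 ?ahom1 // !exprS ahomM IH. Qed.

End AlgHom.

Lemma ahom_comp (K : fieldType) (A B C : algType K) (f : B -> C) (g : A -> B) :
  is_alg_hom f -> is_alg_hom g -> is_alg_hom (fun a => f (g a)).
Proof.
move=> hf hg; split; last split.
- by move=> k a b; rewrite (ahomD hg) (ahomZ hg) (ahomD hf) (ahomZ hf).
- by move=> a b; rewrite (ahomM hg) (ahomM hf).
- by rewrite (ahom1 hg) (ahom1 hf).
Qed.

Lemma ahom_id (K : fieldType) (A : algType K) : is_alg_hom (@id A).
Proof. by []. Qed.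

Section StableEndomorphisms.
Variables (K : fieldType) (W : lmodType K).

(* P is a subspace of W, and W is nonzero (so that End(W) is a nonzero ring) *)
Record nontrivial_subspace (P : W -> Prop) : Prop := NontrivialSubspace {
  subspace0 : P 0;
  subspaceD : forall u v, P u -> P v -> P (u + v);
  subspaceZ : forall k u, P u -> P (k *: u);
  space_nontrivial : exists w : W, w != 0 }.

Variables (P : W -> Prop) (hP : nontrivial_subspace P).

(* The index hP' only serves to carry the closure properties of P, so that the
   algebra structure below can be inferred from the type. *)
Record stable_endo (hP' : nontrivial_subspace P) := StableEndo {
  endo_fun :> W -> W;
  endo_linear : forall k u v, endo_fun (k *: u + v) = k *: endo_fun u + endo_fun v;
  endo_stable : forall w, P w -> P (endo_fun w) }.

Local Notation End := (stable_endo hP).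

Lemma endo_ext (f g : End) : f =1 g -> f = g.
Proof.
case: f g => f lf sf [g lg sg] /= /funext efg; subst g.
by congr StableEndo; apply: Prop_irrelevance.
Qed.

HB.instance Definition _ := gen_eqMixin End.
HB.instance Definition _ := gen_choiceMixin End.

Lemma endoD (f : End) u v : f (u + v) = f u + f v.
Proof. by rewrite -[u]scale1r endo_linear !scale1r. Qed.

Lemma endoZ (f : End) k u : f (k *: u) = k *: f u.
Proof.
have f0 : f 0 = 0 by apply: (addrI (f 0)); rewrite -endoD !addr0.
by rewrite -[k *: u]addr0 endo_linear f0 addr0.
Qed.

Definition endo0 : End.
Proof.
refine (@StableEndo hP (fun _ => 0) _ _); last by move=> *; apply: subspace0.
by move=> k u v; rewrite scaler0 addr0.
Defined.

Definition endo_opp (f : End) : End.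
Proof.
refine (@StableEndo hP (fun w => - f w) _ _).
- by move=> k u v; rewrite endo_linear opprD scalerN.
- by move=> w Pw; rewrite -scaleN1r; apply/(subspaceZ hP)/endo_stable.
Defined.

Definition endo_add (f g : End) : End.
Proof.
refine (@StableEndo hP (fun w => f w + g w) _ _).
- by move=> k u v; rewrite !endo_linear scalerDr addrACA.
- by move=> w Pw; apply: (subspaceD hP); apply: endo_stable.
Defined.

Definition endo_id : End := @StableEndo hP id (fun _ _ _ => erefl) (fun _ => id).

Definition endo_comp (f g : End) : End.
Proof.
refine (@StableEndo hP (fun w => f (g w)) _ _).
- by move=> k u v; rewrite !endo_linear.
- by move=> w Pw; do 2 apply: endo_stable.
Defined.

Definition endo_scale (k : K) (f : End) : End.
Proof.
refine (@StableEndo hP (fun w => k *: f w) _ _).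
- by move=> a u v; rewrite endo_linear scalerDr !scalerA mulrC.
- by move=> w Pw; apply/(subspaceZ hP)/endo_stable.
Defined.

Fact endo_addA : associative endo_add.
Proof. by move=> f g h; apply: endo_ext => w /=; rewrite addrA. Qed.
Fact endo_addC : commutative endo_add.
Proof. by move=> f g; apply: endo_ext => w /=; rewrite addrC. Qed.
Fact endo_add0 : left_id endo0 endo_add.
Proof. by move=> f; apply: endo_ext => w /=; rewrite add0r. Qed.
Fact endo_addN : left_inverse endo0 endo_opp endo_add.
Proof. by move=> f; apply: endo_ext => w /=; rewrite addNr. Qed.
HB.instance Definition _ :=
  GRing.isZmodule.Build End endo_addA endo_addC endo_add0 endo_addN.

Fact endo_compA : associative endo_comp.
Proof. by move=> f g h; apply: endo_ext. Qed.
Fact endo_id_comp : left_id endo_id endo_comp.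
Proof. by move=> f; apply: endo_ext. Qed.
Fact endo_comp_id : right_id endo_id endo_comp.
Proof. by move=> f; apply: endo_ext. Qed.
Fact endo_compDl : left_distributive endo_comp +%R.
Proof. by move=> f g h; apply: endo_ext. Qed.
Fact endo_compDr : right_distributive endo_comp +%R.
Proof. by move=> f g h; apply: endo_ext => w /=; rewrite endoD. Qed.
Fact endo_id_neq0 : endo_id != 0.
Proof.
apply/eqP => /(congr1 (fun f : End => endo_fun f)) id0.
by have [w /eqP []] := space_nontrivial hP; rewrite -[w]/(endo_fun endo_id w) id0.
Qed.
HB.instance Definition _ := GRing.Zmodule_isNzRing.Build End
  endo_compA endo_id_comp endo_comp_id endo_compDl endo_compDr endo_id_neq0.

Fact endo_scaleA a b (f : End) : endo_scale a (endo_scale b f) = endo_scale (a * b) f.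
Proof. by apply: endo_ext => w /=; rewrite scalerA. Qed.
Fact endo_scale1 : left_id 1 endo_scale.
Proof. by move=> f; apply: endo_ext => w /=; rewrite scale1r. Qed.
Fact endo_scaleDr : right_distributive endo_scale +%R.
Proof. by move=> a f g; apply: endo_ext => w /=; rewrite scalerDr. Qed.
Fact endo_scaleDl (f : End) : {morph endo_scale^~ f : a b / a + b}.
Proof. by move=> a b; apply: endo_ext => w /=; rewrite scalerDl. Qed.
HB.instance Definition _ := GRing.Zmodule_isLmodule.Build K End
  endo_scaleA endo_scale1 endo_scaleDr endo_scaleDl.

Fact endo_scaleAl (a : K) (f g : End) : a *: (f * g) = (a *: f) * g.
Proof. by apply: endo_ext. Qed.
HB.instance Definition _ := GRing.Lmodule_isLalgebra.Build K End endo_scaleAl.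
Fact endo_scaleAr (a : K) (f g : End) : a *: (f * g) = f * (a *: g).
Proof. by apply: endo_ext => w /=; rewrite endoZ. Qed.
HB.instance Definition _ := GRing.Lalgebra_isAlgebra.Build K End endo_scaleAr.

Lemma endo_addE (f g : End) w : (f + g) w = f w + g w. Proof. by []. Qed.
Lemma endo_oppE (f : End) w : (- f) w = - f w. Proof. by []. Qed.
Lemma endo_mulE (f g : End) w : (f * g) w = f (g w). Proof. by []. Qed.
Lemma endo_scaleE k (f : End) w : (k *: f) w = k *: f w. Proof. by []. Qed.
Lemma endo1E w : (1 : End) w = w. Proof. by []. Qed.

Lemma endo_sumE I (r : seq I) (F : I -> End) w :
  (\sum_(i <- r) F i) w = \sum_(i <- r) F i w.
Proof. by elim: r => [|i r IH]; rewrite ?big_nil // !big_cons endo_addE IH. Qed.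

End StableEndomorphisms.

Section Presentation.
Variables (K : fieldType) (n : nat) (A : algType K) (x y : 'I_n -> A).
Hypothesis presA : jacobson_presentation x y.

Lemma yx i : y i * x i = 1.
Proof. by case: presA => [[]]. Qed.

Lemma xy_comm i j : i != j -> x i * y j = y j * x i.
Proof. by case: presA => [[_ /(_ i j) rel]] _ /rel []. Qed.

Lemma xx_comm i j : x i * x j = x j * x i.
Proof. by have [->//|ij] := eqVneq i j; case: presA => [[_ /(_ i j ij) []]]. Qed.

Lemma yy_comm i j : y i * y j = y j * y i.
Proof. by have [->//|ij] := eqVneq i j; case: presA => [[_ /(_ i j ij) []]]. Qed.

Lemma jacobson_rel_hom (B : algType K) (g : A -> B) : is_alg_hom g ->
  jacobson_rel (fun i => g (x i)) (fun i => g (y i)).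
Proof.
move=> hg; split=> [i|i j ij]; first by rewrite -(ahomM hg) yx (ahom1 hg).
by rewrite -!(ahomM hg) xy_comm // xx_comm yy_comm.
Qed.

Lemma ahom_unique (B : algType K) (g1 g2 : A -> B) : is_alg_hom g1 -> is_alg_hom g2 ->
  (forall i, g1 (x i) = g2 (x i) /\ g1 (y i) = g2 (y i)) -> g1 =1 g2.
Proof.
move=> h1 h2 e a; case: presA => _ /(_ B _ _ (jacobson_rel_hom h1)) [f [_ _ uniq_f]].
by rewrite (uniq_f g1 h1) ?(uniq_f g2 h2) // => i; have [-> ->] := e i.
Qed.

Lemma ahom_exists (B : algType K) (u v : 'I_n -> B) : jacobson_rel u v ->
  {f : A -> B | is_alg_hom f /\ forall i, f (x i) = u i /\ f (y i) = v i}.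
Proof.
move=> r; apply: cid.
by case: presA => _ /(_ B u v r) [f [hf hx _]]; exists f.
Qed.

End Presentation.

Section MultiIndex.
Variable n : nat.

Definition mindex := {ffun 'I_n -> nat}.
Definition mzero : mindex := [ffun => 0%N].
Definition madd (a b : mindex) : mindex := [ffun j => (a j + b j)%N].
Definition msub (a b : mindex) : mindex := [ffun j => (a j - b j)%N].
Definition msingle (i : 'I_n) (k : nat) : mindex := [ffun j => if j == i then k else 0%N].
Definition munit (i : 'I_n) : mindex := msingle i 1.
Definition mle (a b : mindex) : bool := [forall j, a j <= b j]%N.
Definition mrestr (r : seq 'I_n) (c : 'I_n -> nat) : mindex :=
  [ffun k => \sum_(j <- r) (if k == j then c j else 0)]%N.

Lemma maddE a b j : madd a b j = (a j + b j)%N. Proof. by rewrite ffunE. Qed.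
Lemma msubE a b j : msub a b j = (a j - b j)%N. Proof. by rewrite ffunE. Qed.
Lemma msingleE i k j : msingle i k j = if j == i then k else 0%N.
Proof. by rewrite ffunE. Qed.
Lemma munitE i j : munit i j = if j == i then 1%N else 0%N.
Proof. by rewrite ffunE. Qed.
Definition mindexE := (maddE, msubE, munitE, msingleE).

Lemma mrestr_all (c : 'I_n -> nat) : mrestr (index_enum 'I_n) c = [ffun k => c k].
Proof.
apply/ffunP => k; rewrite !ffunE -big_mkcond /=.
by rewrite (eq_bigl (fun j => j == k)) ?big_pred1_eq // => j; rewrite eq_sym.
Qed.

Lemma mrestr_cons j r c k :
  mrestr (j :: r) c k = ((if k == j then c j else 0) + mrestr r c k)%N.
Proof. by rewrite !ffunE big_cons. Qed.

Lemma mrestr_nil c : mrestr [::] c = mzero.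
Proof. by apply/ffunP => k; rewrite !ffunE big_nil. Qed.

End MultiIndex.
Arguments mzero {n}.

Section FockModule.
Variables (K : fieldType) (n : nat).
Local Notation mindex := (mindex n).

Definition fock := mindex -> K^o.

Lemma fock_addE (u v : fock) h : (u + v) h = u h + v h. Proof. by []. Qed.
Lemma fock_oppE (u : fock) h : (- u) h = - u h. Proof. by []. Qed.
Lemma fock_scaleE k (u : fock) h : (k *: u) h = k * u h. Proof. by []. Qed.
Lemma fock0E h : (0 : fock) h = 0. Proof. by []. Qed.
Lemma fock_sumE I (r : seq I) (F : I -> fock) h :
  (\sum_(i <- r) F i) h = \sum_(i <- r) F i h.
Proof. by elim: r => [|i r IH]; rewrite ?big_nil // !big_cons fock_addE IH. Qed.

Definition delta (g : mindex) : fock := fun h => (h == g)%:R.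

Lemma delta_eq g : delta g g = 1.
Proof. by rewrite /delta eqxx. Qed.

Lemma delta_neq g h : g != h -> delta g h = 0.
Proof. by rewrite /delta eq_sym => /negbTE ->. Qed.

Lemma fock_nontrivial : nontrivial_subspace (fun _ : fock => True).
Proof.
split=> //; exists (delta mzero); apply/eqP => /(congr1 (fun w : fock => w mzero)).
by rewrite delta_eq => /eqP; rewrite oner_eq0.
Qed.

Definition fock_endo := stable_endo fock_nontrivial.

Lemma fock_endo_ext (f g : fock_endo) : (forall w h, f w h = g w h) -> f = g.
Proof. by move=> e; apply: endo_ext => w; apply/funext/e. Qed.

Definition fock_op (F : fock -> fock)
    (linF : forall k u v, F (k *: u + v) = k *: F u + F v) : fock_endo :=
  @StableEndo _ _ _ fock_nontrivial F linF (fun _ _ => I).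

Definition raise_fun (i : 'I_n) (w : fock) : fock :=
  fun h => (0 < h i)%N%:R * w (msub h (munit i)).
Definition lower_fun (i : 'I_n) (w : fock) : fock := fun h => w (madd h (munit i)).

Fact raise_linear i k u v : raise_fun i (k *: u + v) = k *: raise_fun i u + raise_fun i v.
Proof. by apply/funext => h; rewrite /raise_fun /= mulrDr mulrCA. Qed.
Fact lower_linear i k u v : lower_fun i (k *: u + v) = k *: lower_fun i u + lower_fun i v.
Proof. by []. Qed.

Definition raise i := fock_op (raise_linear i).
Definition lower i := fock_op (lower_linear i).

Lemma raiseE i w h : raise i w h = (0 < h i)%N%:R * w (msub h (munit i)).
Proof. by []. Qed.
Lemma lowerE i w h : lower i w h = w (madd h (munit i)).
Proof. by []. Qed.

Lemma fock_rel : jacobson_rel raise lower.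
Proof.
split=> [i|i j ij].
  apply: fock_endo_ext => w h; rewrite endo_mulE lowerE raiseE endo1E !mindexE eqxx.
  rewrite addn1 mul1r; congr w; apply/ffunP => j; rewrite !mindexE.
  by case: eqP => _; rewrite ?addn1 ?subn1 ?addn0 ?subn0.
have ji : (j == i) = false by rewrite eq_sym (negbTE ij).
split; apply: fock_endo_ext => w h; rewrite !endo_mulE ?(raiseE, lowerE) ?mindexE.
- rewrite (negbTE ij) addn0; congr (_ * w _); apply/ffunP => k; rewrite !mindexE.
  by case: (eqVneq k i) => [->|_]; rewrite ?ji ?(negbTE ij) ?subn0 ?addn0.
- rewrite ji (negbTE ij) !subn0 mulrCA.
  by congr (_ * (_ * w _)); apply/ffunP => k; rewrite !mindexE subnAC.
- by congr w; apply/ffunP => k; rewrite !mindexE addnAC.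
Qed.

Lemma bool_natrM (b1 b2 : bool) : (b1%:R : K) * b2%:R = (b1 && b2)%:R.
Proof. by case: b1; case: b2; rewrite ?mul1r ?mul0r. Qed.

Lemma raise_expE i k w h :
  (raise i ^+ k) w h = (k <= h i)%N%:R * w (msub h (msingle i k)).
Proof.
elim: k w h => [|k IH] w h.
  rewrite expr0 endo1E mul1r; congr w; apply/ffunP => j; rewrite !ffunE.
  by case: ifP; rewrite subn0.
rewrite exprS endo_mulE raiseE IH; case hi: (h i) => [|m]; first by rewrite !mul0r.
rewrite mul1r !ffunE hi eqxx subn1 ltnS; congr (_ * w _).
apply/ffunP => j; rewrite !ffunE; case: (eqVneq j i) => [->|_]; last by rewrite !subn0.
by rewrite hi subn1 subSS.
Qed.

Lemma lower_expE i k w h : (lower i ^+ k) w h = w (madd h (msingle i k)).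
Proof.
elim: k w h => [|k IH] w h.
  rewrite expr0 endo1E; congr w; apply/ffunP => j; rewrite !ffunE.
  by case: ifP; rewrite addn0.
rewrite exprS endo_mulE lowerE IH; congr w.
apply/ffunP => j; rewrite !ffunE; case: ifP => _; last by rewrite !addn0.
by rewrite -addnA add1n.
Qed.

Lemma raise_prodE r c w h :
  (\prod_(j <- r) raise j ^+ c j) w h =
  (mle (mrestr r c) h)%:R * w (msub h (mrestr r c)).
Proof.
elim: r w h => [|j r IH] w h.
  rewrite big_nil endo1E mrestr_nil.
  have -> : mle mzero h by apply/forallP => k; rewrite ffunE.
  by rewrite mul1r; congr w; apply/ffunP => k; rewrite !ffunE subn0.
rewrite big_cons endo_mulE raise_expE IH.
have [le_cj|lt_hj] := leqP (c j) (h j); last first.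
  suff -> : mle (mrestr (j :: r) c) h = false by rewrite !mul0r.
  apply/negP => /forallP /(_ j); rewrite mrestr_cons eqxx.
  by move/(leq_trans (leq_addr _ _)); rewrite leqNgt lt_hj.
have -> : mle (mrestr r c) (msub h (msingle j (c j))) = mle (mrestr (j :: r) c) h.
  apply: eq_forallb => k; rewrite mrestr_cons !ffunE leq_subRL //.
  by case: eqP => [->|].
rewrite mul1r; congr (_ * w _); apply/ffunP => k.
by rewrite !msubE msingleE mrestr_cons subnDA.
Qed.

Lemma lower_prodE r c w h :
  (\prod_(j <- r) lower j ^+ c j) w h = w (madd h (mrestr r c)).
Proof.
elim: r w h => [|j r IH] w h.
  by rewrite big_nil endo1E mrestr_nil; congr w; apply/ffunP => k; rewrite !ffunE addn0.
rewrite big_cons endo_mulE lower_expE IH; congr w.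
by apply/ffunP => k; rewrite !maddE msingleE mrestr_cons addnA.
Qed.

Lemma vacuum_factorE j w h : (1 - raise j * lower j) w h = (h j == 0)%N%:R * w h.
Proof.
rewrite endo_addE endo1E endo_oppE endo_mulE fock_addE fock_oppE raiseE lowerE.
case hj: (h j) => [|m]; first by rewrite mul0r subr0 mul1r.
suff -> : madd (msub h (munit j)) (munit j) = h by rewrite mul1r mul0r subrr.
apply/ffunP => k; rewrite !ffunE; case: eqP => [->|]; last by rewrite subn0 addn0.
by rewrite hj subn1 addn1.
Qed.

Lemma vacuum_prodE r w h :
  (\prod_(j <- r) (1 - raise j * lower j)) w h = (all (fun j => h j == 0)%N r)%:R * w h.
Proof.
elim: r w h => [|j r IH] w h; first by rewrite big_nil endo1E mul1r.
by rewrite big_cons endo_mulE vacuum_factorE IH mulrA bool_natrM.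
Qed.

End FockModule.

Section Monomials.
Variables (K : fieldType) (n : nat) (A : algType K) (x y : 'I_n -> A).
Hypothesis presA : jacobson_presentation x y.
Local Notation mindex := (mindex n).
Local Notation fock := (fock K n).

Definition rho : A -> fock_endo K n := sval (ahom_exists presA (fock_rel K n)).

Lemma rho_hom : is_alg_hom rho.
Proof. by case: (svalP (ahom_exists presA (fock_rel K n))). Qed.

Lemma rho_x i : rho (x i) = raise K i.
Proof. by case: (svalP (ahom_exists presA (fock_rel K n))) => _ /(_ i) []. Qed.

Lemma rho_y i : rho (y i) = lower K i.
Proof. by case: (svalP (ahom_exists presA (fock_rel K n))) => _ /(_ i) []. Qed.

Lemma rhoM a b w : rho (a * b) w = rho a (rho b w).
Proof. by rewrite (ahomM rho_hom). Qed.

Definition xmon (a : mindex) : A := \prod_(j < n) x j ^+ a j.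
Definition ymon (b : mindex) : A := \prod_(j < n) y j ^+ b j.
Definition monomial (a b : mindex) : A := xmon a * ymon b.
Definition vacuum : A := \prod_(j < n) (1 - x j * y j).
Definition matrix_unit (a b : mindex) : A := xmon a * vacuum * ymon b.

Lemma rho_xmon a w h : rho (xmon a) w h = (mle a h)%:R * w (msub h a).
Proof.
rewrite /xmon (ahom_prod rho_hom); under eq_bigr do rewrite (ahomX rho_hom) rho_x.
by rewrite raise_prodE mrestr_all; congr ((mle _ _)%:R * w (msub _ _)); apply/ffunP => j; rewrite ffunE.
Qed.

Lemma rho_ymon b w h : rho (ymon b) w h = w (madd h b).
Proof.
rewrite /ymon (ahom_prod rho_hom); under eq_bigr do rewrite (ahomX rho_hom) rho_y.
by rewrite lower_prodE mrestr_all; congr (w (madd _ _)); apply/ffunP => j; rewrite ffunE.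
Qed.

Lemma rho_vacuum w h : rho vacuum w h = (h == mzero)%:R * w h.
Proof.
rewrite /vacuum (ahom_prod rho_hom).
under eq_bigr do rewrite (ahomB rho_hom) (ahom1 rho_hom) (ahomM rho_hom) rho_x rho_y.
rewrite vacuum_prodE; congr ((nat_of_bool _)%:R * _); apply/idP/eqP => [/allP h0|->].
  by apply/ffunP => j; rewrite ffunE; apply/eqP/h0; rewrite mem_index_enum.
by apply/allP => j _; rewrite ffunE.
Qed.

Lemma rho_monomial a b w h : rho (monomial a b) w h = (mle a h)%:R * w (madd (msub h a) b).
Proof. by rewrite rhoM rho_xmon rho_ymon. Qed.

Lemma rho_matrix_unit a b w : rho (matrix_unit a b) w = w b *: delta K a.
Proof.
apply/funext => h; rewrite !rhoM rho_xmon rho_vacuum rho_ymon mulrA bool_natrM.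
rewrite fock_scaleE /delta mulrC.
have -> : (mle a h && (msub h a == mzero)) = (h == a).
  apply/andP/eqP => [[/forallP le_ah /eqP ha]|->].
    apply/ffunP => j; apply/eqP; rewrite eqn_leq le_ah /= -subn_eq0.
    by have := congr1 (fun f : mindex => f j) ha; rewrite !ffunE => ->.
  by split; [apply/forallP | apply/eqP/ffunP => j; rewrite !ffunE subnn].
case: eqP => [->|_]; last by rewrite !mulr0.
by congr (w _ * _); apply/ffunP => j; rewrite !mindexE subnn.
Qed.

End Monomials.

Lemma prod_munit (R : pzRingType) (n : nat) (z : 'I_n -> R) i :
  \prod_(j < n) z j ^+ munit i j = z i.
Proof.
rewrite (eq_bigr (fun j => if j == i then z j else 1)) => [|j _]; last first.
  by rewrite munitE; case: ifP; rewrite ?expr1 ?expr0.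
by rewrite -big_mkcond big_pred1_eq.
Qed.

Lemma mon_munit (R : pzRingType) (n : nat) (z : 'I_n -> R)
    (zz_comm : forall i j, z i * z j = z j * z i) (a : mindex n) i :
  \prod_(j < n) z j ^+ madd a (munit i) j = z i * \prod_(j < n) z j ^+ a j.
Proof.
have cz j k p q : GRing.comm (z j ^+ p) (z k ^+ q) by apply/commrX/commr_sym/commrX.
under eq_bigr do rewrite maddE exprD.
rewrite prodrM_comm => [|? ? _ _]; last exact: cz.
rewrite prod_munit; apply/esym/commr_prod => j _.
by apply/commr_sym; rewrite -[z i]expr1; apply: cz.
Qed.

(* The span of the normal monomials is stable under left multiplication by the
   generators; the universal property then forces left multiplication by any
   element of A to preserve it, and a = a * 1 lies in it. *)
Section Spanning.
Variables (K : fieldType) (n : nat) (A : algType K) (x y : 'I_n -> A).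
Hypothesis presA : jacobson_presentation x y.
Local Notation mindex := (mindex n).
Local Notation xmon := (xmon x).
Local Notation ymon := (ymon y).
Local Notation monomial := (monomial x y).

Lemma xmon_munit a i : xmon (madd a (munit i)) = x i * xmon a.
Proof. exact: (mon_munit (xx_comm presA)). Qed.

Lemma ymon_munit b i : ymon (madd b (munit i)) = y i * ymon b.
Proof. exact: (mon_munit (yy_comm presA)). Qed.

Lemma y_xmon_comm (a : mindex) i : a i = 0%N -> y i * xmon a = xmon a * y i.
Proof.
move=> ai0; apply: commr_prod => j _; have [->|ji] := eqVneq j i.
  by rewrite ai0 expr0; exact: commr1.
by apply: commrX; rewrite /GRing.comm (xy_comm presA ji).
Qed.

Lemma y_xmon_cancel (a : mindex) i : (0 < a i)%N -> y i * xmon a = xmon (msub a (munit i)).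
Proof.
move=> ai; have -> : a = madd (msub a (munit i)) (munit i).
  apply/ffunP => j; rewrite !mindexE; case: eqP => [->|]; last by rewrite subn0 addn0.
  by rewrite subnK.
rewrite xmon_munit mulrA (yx presA) mul1r; congr xmon.
by apply/ffunP => j; rewrite !mindexE; case: ifP; rewrite ?addnK ?subn0 ?addn0.
Qed.

Lemma x_monomial i (p : mindex * mindex) :
  x i * monomial p.1 p.2 = monomial (madd p.1 (munit i)) p.2.
Proof. by rewrite /monomial mulrA xmon_munit. Qed.

Definition lower_step (i : 'I_n) (p : mindex * mindex) : mindex * mindex :=
  if (0 < p.1 i)%N then (msub p.1 (munit i), p.2) else (p.1, madd p.2 (munit i)).

Lemma y_monomial i p : y i * monomial p.1 p.2 = monomial (lower_step i p).1 (lower_step i p).2.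
Proof.
rewrite /lower_step /monomial mulrA; case: ifP => ai /=; first by rewrite y_xmon_cancel.
by rewrite y_xmon_comm ?ymon_munit ?mulrA //; apply/eqP; rewrite eqn0Ngt ai.
Qed.

Definition lincomb (s : seq (K * (mindex * mindex))) : A :=
  \sum_(q <- s) q.1 *: monomial q.2.1 q.2.2.

Definition in_span (a : A) : Prop := exists s, a = lincomb s.

Lemma span_subspace : nontrivial_subspace in_span.
Proof.
split.
- by exists [::]; rewrite /lincomb big_nil.
- by move=> u v [s1 ->] [s2 ->]; exists (s1 ++ s2); rewrite /lincomb big_cat.
- move=> k u [s ->]; exists [seq (k * q.1, q.2) | q <- s].
  by rewrite /lincomb big_map scaler_sumr; apply: eq_bigr => q _; rewrite scalerA.
- by exists 1; exact: oner_neq0.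
Qed.

Lemma span_stable (a : A) (f : mindex * mindex -> mindex * mindex) :
  (forall p, a * monomial p.1 p.2 = monomial (f p).1 (f p).2) ->
  forall u, in_span u -> in_span (a * u).
Proof.
move=> af u [s ->]; exists [seq (q.1, f q.2) | q <- s].
by rewrite /lincomb big_map mulr_sumr; apply: eq_bigr => q _; rewrite -scalerAr af.
Qed.

Lemma left_mul_linear (a : A) k u v : a * (k *: u + v) = k *: (a * u) + a * v.
Proof. by rewrite mulrDr scalerAr. Qed.

Definition span_endo := stable_endo span_subspace.

Definition left_x (i : 'I_n) : span_endo :=
  StableEndo span_subspace (left_mul_linear (x i))
    (span_stable (f := fun p => (madd p.1 (munit i), p.2)) (x_monomial i)).

Definition left_y (i : 'I_n) : span_endo :=
  StableEndo span_subspace (left_mul_linear (y i)) (span_stable (y_monomial i)).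

Lemma left_rel : jacobson_rel left_x left_y.
Proof.
split=> [i|i j ij]; first by apply: endo_ext => w /=; rewrite mulrA (yx presA) mul1r.
split; apply: endo_ext => w /=; rewrite !mulrA.
- by rewrite (xy_comm presA ij).
- by rewrite (xx_comm presA).
- by rewrite (yy_comm presA).
Qed.

Lemma A_nontrivial : nontrivial_subspace (fun _ : A => True).
Proof. by split=> //; exists 1; exact: oner_neq0. Qed.

Definition left_mul (a : A) : stable_endo A_nontrivial :=
  StableEndo A_nontrivial (left_mul_linear a) (fun _ _ => I).

Lemma left_mul_hom : is_alg_hom left_mul.
Proof.
split; last split; first by move=> k a b; apply: endo_ext => w /=; rewrite mulrDl scalerAl.
  by move=> a b; apply: endo_ext => w /=; rewrite mulrA.
by apply: endo_ext => w /=; rewrite mul1r.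
Qed.

Definition forget_span (f : span_endo) : stable_endo A_nontrivial :=
  StableEndo A_nontrivial (@endo_linear _ _ _ _ f) (fun _ _ => I).

Lemma forget_span_hom : is_alg_hom forget_span.
Proof. by split; last split; move=> *; apply: endo_ext. Qed.

Theorem spanning (a : A) : in_span a.
Proof.
have [psi [psi_hom psi_gen]] := ahom_exists presA left_rel.
have psi_left : forall b, forget_span (psi b) = left_mul b.
  apply: (ahom_unique presA (ahom_comp forget_span_hom psi_hom) left_mul_hom) => i.
  by have [-> ->] := psi_gen i; split; apply: endo_ext.
have -> : a = psi a 1 by have /= := congr1 (fun f => endo_fun f 1) (psi_left a); rewrite mulr1.
apply: endo_stable; exists [:: (1, (mzero, mzero))].
by rewrite /lincomb big_seq1 scale1r /monomial /xmon /ymon !big1 ?mulr1 // => j _; rewrite ffunE.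
Qed.

End Spanning.

Lemma seq_argmin (T : eqType) (f : T -> nat) (s : seq T) : s != [::] ->
  exists2 q0, q0 \in s & forall q, q \in s -> (f q0 <= f q)%N.
Proof.
elim: s => [//|a s IH] _; have [->|/IH [q1 q1s min_q1]] := eqVneq s [::].
  by exists a; rewrite ?mem_seq1 // => q; rewrite mem_seq1 => /eqP ->.
have [le_a|lt_q1] := leqP (f a) (f q1).
  exists a; first exact: mem_head.
  by move=> q; rewrite in_cons => /predU1P [->//|/min_q1]; apply: leq_trans.
exists q1; first by rewrite in_cons q1s orbT.
by move=> q; rewrite in_cons => /predU1P [->|/min_q1//]; apply: ltnW.
Qed.

(* On a linear combination of monomials, evaluate at delta_b0 in the
   point a0, where (a0, b0) is a term with |b0| minimal: only the terms with
   index (a0, b0) contribute, so their coefficients sum to zero and they can be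
   discarded. *)
Section Faithfulness.
Variables (K : fieldType) (n : nat) (A : algType K) (x y : 'I_n -> A).
Hypothesis presA : jacobson_presentation x y.
Local Notation mindex := (mindex n).
Local Notation rho := (rho presA).
Local Notation lincomb := (lincomb x y).
Local Notation monomial := (monomial x y).

Definition weight (b : mindex) : nat := (\sum_(j < n) b j)%N.

Lemma weight_add (a b : mindex) : weight (madd a b) = (weight a + weight b)%N.
Proof. by rewrite /weight -big_split; apply: eq_bigr => j _; rewrite maddE. Qed.

Lemma rho_lincomb s g h : rho (lincomb s) (delta K g) h =
  \sum_(q <- s) q.1 * (mle q.2.1 h && (madd (msub h q.2.1) q.2.2 == g))%:R.
Proof.
rewrite /lincomb (ahom_sum (rho_hom presA)) endo_sumE fock_sumE; apply: eq_bigr => q _.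
by rewrite (ahomZ (rho_hom presA)) endo_scaleE fock_scaleE rho_monomial /delta bool_natrM.
Qed.

Lemma minimal_term_contribution (s : seq (K * (mindex * mindex))) (q0 q : K * (mindex * mindex)) :
  (forall q, q \in s -> weight q0.2.2 <= weight q.2.2)%N -> q \in s ->
  (mle q.2.1 q0.2.1 && (madd (msub q0.2.1 q.2.1) q.2.2 == q0.2.2)) = (q.2 == q0.2).
Proof.
move=> min_q0 qs; apply/andP/eqP => [[/forallP le_a /eqP ab]|->]; last first.
  by split; [apply/forallP | apply/eqP/ffunP => j; rewrite !mindexE subnn].
have := min_q0 q qs; rewrite -ab weight_add -{2}[weight q.2.2]add0n leq_add2r.
rewrite leqn0 /weight sum_nat_eq0 => /forallP a_eq.
have e1 : q.2.1 = q0.2.1.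
  apply/ffunP => j; apply/eqP; rewrite eqn_leq le_a /= -subn_eq0.
  by have := a_eq j; rewrite msubE.
have e2 : q.2.2 = q0.2.2 by rewrite -ab e1; apply/ffunP => j; rewrite !mindexE subnn.
by move: e1 e2; case: (q.2) => b c; case: (q0.2) => b0 c0 /= -> ->.
Qed.

Lemma lincomb_faithful m (s : seq (K * (mindex * mindex))) : (size s <= m)%N ->
  (forall g, rho (lincomb s) (delta K g) = 0) -> lincomb s = 0.
Proof.
elim: m s => [|m IH] s; first by rewrite leqn0 => /nilP -> _; rewrite /lincomb big_nil.
move=> size_s s_zero; have [->|s_nil] := eqVneq s [::]; first by rewrite /lincomb big_nil.
have [q0 q0s min_q0] := seq_argmin (fun q : K * (mindex * mindex) => weight q.2.2) s_nil.
pose P := fun q : K * (mindex * mindex) => q.2 == q0.2.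
have coef0 : \sum_(q <- s | P q) q.1 = 0.
  transitivity (rho (lincomb s) (delta K q0.2.2) q0.2.1); last by rewrite s_zero.
  rewrite rho_lincomb big_mkcond; apply: eq_big_seq => q qs /=.
  by rewrite (minimal_term_contribution min_q0 qs) /P; case: eqP; rewrite ?mulr1 ?mulr0.
have drop_P : lincomb s = lincomb (filter (predC P) s).
  rewrite /lincomb big_filter [LHS](bigID P) /= -[RHS]add0r; congr (_ + _).
  rewrite (eq_bigr (fun q => q.1 *: monomial q0.2.1 q0.2.2)) => [|q /eqP -> //].
  by rewrite -scaler_suml coef0 scale0r.
rewrite drop_P; apply: IH => [|g]; last by rewrite -drop_P.
have : (count (predC P) s < size s)%N.
  rewrite -(count_predC P s) addnC -{1}[count (predC P) s]addn0 ltn_add2l -has_count.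
  by apply/hasP; exists q0; rewrite //= /P.
by move=> lt_count; rewrite size_filter -ltnS (leq_trans lt_count size_s).
Qed.

Theorem rho_faithful (a : A) : (forall g, rho a (delta K g) = 0) -> a = 0.
Proof. by have [s ->] := spanning presA a; apply: lincomb_faithful. Qed.

End Faithfulness.
Arguments rho_faithful {K n A x y} presA {a}.

Lemma scaler_injl (K : fieldType) (V : lmodType K) (u : V) :
  u != 0 -> injective ( *:%R^~ u : K -> V).
Proof.
move=> u0 a b /eqP; rewrite -subr_eq0 -scalerBl scaler_eq0 (negbTE u0) orbF.
by rewrite subr_eq0 => /eqP.
Qed.

Section Rigidity.
Variables (K : fieldType) (n : nat) (A : algType K) (x y : 'I_n -> A).
Hypotheses (presA : jacobson_presentation x y) (n_gt0 : (0 < n)%N).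
Local Notation mindex := (mindex n).
Local Notation rho := (rho presA).
Local Notation E := (matrix_unit x y).
Local Notation delta := (delta K).

Let i0 : 'I_n := Ordinal n_gt0.

Let mindex_neq (u v : mindex) : (v i0 < u i0)%N -> u != v.
Proof. by move=> lt_vu; apply/eqP => uv; rewrite uv ltnn in lt_vu. Qed.

Lemma rhoB (a b : A) w : rho (a - b) w = rho a w - rho b w.
Proof. by rewrite (ahomB (rho_hom presA)). Qed.

Lemma matrix_unit_neq0 a b : E a b != 0.
Proof.
apply/eqP => /(congr1 (fun f => rho f (delta b) a)).
rewrite rho_matrix_unit fock_scaleE !delta_eq mulr1 (ahom0 (rho_hom presA)).
by move/eqP; rewrite oner_eq0.
Qed.

Lemma matrix_unit_sqr a b : a != b -> E a b * E a b = 0.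
Proof.
move=> ab; apply: (rho_faithful presA) => g; apply/funext => h.
by rewrite rhoM !rho_matrix_unit !fock_scaleE (delta_neq _ ab) !(mulr0, mul0r).
Qed.

Lemma matrix_unit_sandwich g h a b (c : A) :
  E g h * c * E a b = rho c (delta a) h *: E g b.
Proof.
apply/subr0_eq/(rho_faithful presA) => t; apply/funext => k.
rewrite rhoB (rhoM presA (E g h * c)) (rhoM presA (E g h)) (ahomZ (rho_hom presA)) endo_scaleE.
rewrite !rho_matrix_unit endoZ.
by rewrite fock_addE fock_oppE !fock_scaleE mulrCA mulrA subrr.
Qed.

Lemma centraliser_matrix_units (z : A) :
  (forall a b, a != b -> z * E a b = E a b * z) -> exists c : K, z = c%:A.
Proof.
move=> zE; pose d b := rho z (delta b) b.
have z_delta a b : a != b -> rho z (delta a) = d b *: delta a.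
  move=> ab; have Eab : delta a = rho (E a b) (delta b).
    by rewrite rho_matrix_unit delta_eq scale1r.
  by rewrite {1}Eab -rhoM zE // rhoM rho_matrix_unit.
have d_const a b : a != b -> d a = d b.
  by move=> ab; rewrite {1}/d (z_delta a b ab) fock_scaleE delta_eq mulr1.
exists (d mzero); apply/subr0_eq/(rho_faithful presA) => g.
rewrite rhoB (ahomZ (rho_hom presA)) (ahom1 (rho_hom presA)) endo_scaleE endo1E.
have [->|g0] := eqVneq g mzero; last by rewrite (z_delta _ _ g0) subrr.
have e0 : munit i0 != mzero by apply: mindex_neq; rewrite !ffunE eqxx.
by rewrite (z_delta mzero (munit i0)) 1?eq_sym // (d_const _ _ e0) subrr.
Qed.

(* An algebra endomorphism fixing every E_ab with a != b is the identity: it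
   fixes E_gh c E_ab = <c delta_a>(h) E_gb, and E_gb is nonzero. *)
Lemma fix_matrix_units (s : A -> A) : is_alg_hom s ->
  (forall a b, a != b -> s (E a b) = E a b) -> s =1 id.
Proof.
move=> hs sE c; apply/subr0_eq/(rho_faithful presA) => a; apply/funext => h.
rewrite rhoB fock_addE fock_oppE fock0E; apply/eqP; rewrite subr_eq0; apply/eqP.
pose b := madd a (munit i0); pose g := madd (madd h b) (munit i0).
have ab : b != a by apply: mindex_neq; rewrite !mindexE eqxx addn1.
have gh : g != h by apply: mindex_neq; rewrite !mindexE eqxx !addn1 ltnS leq_addr.
have gb : g != b by apply: mindex_neq; rewrite !mindexE eqxx !addn1 ltnS leq_addl.
apply: (scaler_injl (matrix_unit_neq0 g b)); rewrite /= -!matrix_unit_sandwich.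
rewrite -{1}(sE g h gh) -{1}(sE a b) 1?eq_sym // -!(ahomM hs).
by rewrite matrix_unit_sandwich (ahomZ hs) sE.
Qed.

Lemma conj_commuting_central (s : A -> A) (w w' : A) : is_alg_hom s ->
  w * w' = 1 -> w' * w = 1 -> (forall c, s (w * c * w') = w * s c * w') ->
  forall c, w' * s w * s c = s c * (w' * s w).
Proof.
move=> hs ww' w'w s_conj c; have := s_conj c; rewrite !(ahomM hs) => sc.
have sw'w : s w' * s w = 1 by rewrite -(ahomM hs) w'w (ahom1 hs).
rewrite -mulrA -[s w * s c]mulr1 -sw'w [s w * s c * _]mulrA sc.
by rewrite !mulrA w'w mul1r.
Qed.

Theorem central_autom_id (s : A -> A) : is_autom s ->
  (forall w w' : A, w * w' = 1 -> w' * w = 1 ->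
     forall c, s (w * c * w') = w * s c * w') -> s =1 id.
Proof.
move=> [hs [s' sK s'K]] s_conj; apply: fix_matrix_units => // a b ab.
set N := E a b; have NN : N * N = 0 by exact: matrix_unit_sqr.
pose w := 1 + N; pose w' := 1 - N.
have ww' : w * w' = 1 by rewrite mulrDl mul1r mulrBr mulr1 NN subr0 subrK.
have w'w : w' * w = 1 by rewrite mulrBl mul1r mulrDr mulr1 NN addr0 addrK.
(* w' s(w) is central, hence a scalar k, so s(N) = k (1 + N) - 1 *)
have [k wsw] : exists k : K, w' * s w = k%:A.
  apply: centraliser_matrix_units => g h _.
  by rewrite -(s'K (E g h)) (conj_commuting_central hs ww' w'w (s_conj w w' ww' w'w)).
have sN : s N = k *: w - 1.
  rewrite -mulr_algr -wsw mulrA ww' mul1r.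
  by rewrite /w (ahomD hs) (ahom1 hs) [1 + _]addrC addrK.
(* s(N)^2 = 0 forces k = 1 *)
have sNN : s N * N = (k - 1) *: N.
  by rewrite sN mulrBl mul1r -scalerAl mulrDl mul1r NN addr0 scalerBl scale1r.
have : (k - 1) ^+ 2 *: N = 0.
  by rewrite expr2 -scalerA -sNN scalerAr -sNN mulrA -(ahomM hs) NN (ahom0 hs) mul0r.
move/eqP; rewrite scaler_eq0 (negbTE (matrix_unit_neq0 a b)) orbF expf_eq0 /= subr_eq0.
by move/eqP=> k1; rewrite sN k1 scale1r /w [1 + _]addrC addrK.
Qed.

End Rigidity.

Section Automorphisms.
Variables (K : fieldType) (A : algType K).

Lemma autom_comp (p q s : A -> A) : is_autom p -> is_autom q ->
  (forall a, s a = p (q a)) -> is_autom s.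
Proof.
move=> [hp [p' pK p'K]] [hq [q' qK q'K]] /funext ->; split; first exact: ahom_comp.
by exists (fun a => q' (p' a)) => a; rewrite ?pK ?qK ?q'K ?p'K.
Qed.

Lemma autom_id : is_autom (@id A).
Proof. by split; last exists id. Qed.

Lemma inn_id : in_inn (@id A).
Proof. by exists 1, 1; rewrite mulr1; split=> // a; rewrite mul1r mulr1. Qed.

Lemma inn_conj (w w' : A) : w * w' = 1 -> w' * w = 1 -> in_inn (fun a => w * a * w').
Proof. by move=> ww' w'w; exists w, w'. Qed.

Lemma inn_autom (s : A -> A) : in_inn s -> is_autom s.
Proof.
case=> w [w' [ww' w'w /funext ->]]; split.
  split; last split; last by rewrite mulr1.
    by move=> k a b; rewrite mulrDr mulrDl -scalerAr -scalerAl.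
  by move=> a b; rewrite -!mulrA [w' * (w * _)]mulrA w'w mul1r.
exists (fun a => w' * a * w) => a.
  by rewrite !mulrA w'w mul1r -mulrA w'w mulr1.
by rewrite !mulrA ww' mul1r -mulrA ww' mulr1.
Qed.

Lemma prod_set_autom (P Q : (A -> A) -> Prop) :
  (forall p, P p -> is_autom p) -> (forall q, Q q -> is_autom q) ->
  forall s, prod_set P Q s -> is_autom s.
Proof. by move=> autP autQ s [p [q [/autP ap /autQ aq]]]; apply: autom_comp. Qed.

Lemma prod_set_l (P Q : (A -> A) -> Prop) (s : A -> A) : P s -> Q id -> prod_set P Q s.
Proof. by move=> Ps Qid; exists s, id. Qed.

Lemma prod_set_r (P Q : (A -> A) -> Prop) (s : A -> A) : P id -> Q s -> prod_set P Q s.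
Proof. by move=> Pid Qs; exists id, s. Qed.

End Automorphisms.

Section TorusAndPermutations.
Variables (K : fieldType) (n : nat) (A : algType K) (x y : 'I_n -> A).
Hypothesis presA : jacobson_presentation x y.

Lemma torus_autom (s : A -> A) : in_torus x y s -> is_autom s.
Proof. by case. Qed.

Lemma sym_autom (s : A -> A) : in_sym x y s -> is_autom s.
Proof. by case. Qed.

Lemma torus_id : in_torus x y id.
Proof.
split; first exact: autom_id.
by exists (fun _ => 1); split=> [i|i]; rewrite ?oner_eq0 // invr1 !scale1r.
Qed.

Lemma sym_id : in_sym x y id.
Proof. by split; [exact: autom_id | exists 1%g => i; rewrite perm1]. Qed.

Lemma x_neq0 i : x i != 0.
Proof.
by apply/eqP => xi0; have := yx presA i; rewrite xi0 mulr0 => /eqP; rewrite eq_sym oner_eq0.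
Qed.

Lemma autom_of_inverse (f g : A -> A) : is_alg_hom f -> is_alg_hom g ->
  (forall i, f (g (x i)) = x i /\ f (g (y i)) = y i) ->
  (forall i, g (f (x i)) = x i /\ g (f (y i)) = y i) -> is_autom f.
Proof.
move=> hf hg fg gf; split=> //; exists g.
  exact: (ahom_unique presA (ahom_comp hg hf) (ahom_id A)).
exact: (ahom_unique presA (ahom_comp hf hg) (ahom_id A)).
Qed.

Lemma scaled_rel (mu : 'I_n -> K) : (forall i, mu i != 0) ->
  jacobson_rel (fun i => mu i *: x i) (fun i => (mu i)^-1 *: y i).
Proof.
have scaleM (a b : K) (u v : A) : (a *: u) * (b *: v) = (a * b) *: (u * v).
  by rewrite -scalerAl -scalerAr scalerA.
move=> mu0; split=> [i|i j ij]; first by rewrite scaleM mulVf // (yx presA) scale1r.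
split; rewrite !scaleM mulrC.
- by rewrite (xy_comm presA ij).
- by rewrite (xx_comm presA).
- by rewrite (yy_comm presA).
Qed.

Lemma torus_exists (mu : 'I_n -> K) : (forall i, mu i != 0) ->
  exists t, in_torus x y t /\ forall i, t (x i) = mu i *: x i /\ t (y i) = (mu i)^-1 *: y i.
Proof.
move=> mu0; have mu0' i : (mu i)^-1 != 0 by rewrite invr_eq0.
have [t [ht tE]] := ahom_exists presA (scaled_rel mu0).
have [t' [ht' t'E]] := ahom_exists presA (scaled_rel mu0').
exists t; split=> //; split; last by exists mu.
apply: (autom_of_inverse ht ht') => i; have [tx ty] := tE i; have [t'x t'y] := t'E i.
  by rewrite t'x t'y (ahomZ ht) (ahomZ ht) tx ty !scalerA invrK mulVf ?mulfV ?scale1r.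
by rewrite tx ty (ahomZ ht') (ahomZ ht') t'x t'y !scalerA invrK mulVf ?mulfV ?scale1r.
Qed.

Lemma permuted_rel (p : 'S_n) : jacobson_rel (fun i => x (p i)) (fun i => y (p i)).
Proof.
split=> [i|i j ij]; first exact: (yx presA).
have pij : p i != p j by rewrite (inj_eq perm_inj).
by split; [exact: (xy_comm presA pij) | exact: (xx_comm presA) | exact: (yy_comm presA)].
Qed.

Lemma sym_exists (p : 'S_n) :
  exists t, in_sym x y t /\ forall i, t (x i) = x (p i) /\ t (y i) = y (p i).
Proof.
have [t [ht tE]] := ahom_exists presA (permuted_rel p).
have [t' [ht' t'E]] := ahom_exists presA (permuted_rel p^-1).
exists t; split=> //; split; last by exists p.
apply: (autom_of_inverse ht ht') => i; have [tx ty] := tE i; have [t'x t'y] := t'E i.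
  by rewrite t'x t'y; have [-> ->] := tE ((p^-1)%g i); rewrite permKV.
by rewrite tx ty; have [-> ->] := t'E (p i); rewrite permK.
Qed.

End TorusAndPermutations.

Section Centres.
Variables (K : fieldType) (n : nat) (A : algType K) (x y : 'I_n -> A).
Hypotheses (presA : jacobson_presentation x y) (n_gt0 : (0 < n)%N).

Lemma trivial_centre_of_inner (H : (A -> A) -> Prop) :
  (forall s, H s -> is_autom s) -> H id ->
  (forall w w', w * w' = 1 -> w' * w = 1 -> H (fun a => w * a * w')) ->
  trivial_centre H.
Proof.
move=> autH Hid Hinn s; split=> [[Hs s_comm]|s_id].
  apply: (central_autom_id presA n_gt0 (autH s Hs)) => w w' ww' w'w.
  exact: (s_comm _ (Hinn w w' ww' w'w)).
by have -> : s = id by apply/funext.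
Qed.

(* Inn(A) is normalised by P; P Inn(A) then has trivial centre. *)
Lemma trivial_centre_prod_inn (P : (A -> A) -> Prop) :
  (forall p, P p -> is_autom p) -> P id -> trivial_centre (prod_set P (@in_inn K A)).
Proof.
move=> autP Pid; apply: trivial_centre_of_inner.
- exact: prod_set_autom autP (@inn_autom K A).
- exact: prod_set_r Pid (inn_id A).
- by move=> w w' ww' w'w; exact: prod_set_r Pid (inn_conj ww' w'w).
Qed.

Let i0 : 'I_n := Ordinal n_gt0.

Local Notation SxT := (prod_set (in_sym x y) (in_torus x y)).

(* A central element of S_n x| T^n fixes each index (it commutes with the
   t_mu having a single entry 2) and scales all x_i by the same lambda (it
   commutes with the transpositions). *)
Lemma central_sym_torus_scalar (two_neq0 : 2%:R != 0 :> K) (s : A -> A) :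
  in_centre SxT s -> is_autom s /\
  exists lam : K, lam != 0 /\ forall i, s (x i) = lam *: x i /\ s (y i) = lam^-1 *: y i.
Proof.
move=> s_central; split.
  by case: s_central => Hs _; exact: (prod_set_autom (@sym_autom _ _ _ x y) (@torus_autom _ _ _ x y) Hs).
move: s_central => [[p [q [[[hp _] [pi pE]] [[hq _] [lam [lam0 qE]]] sE]]] s_comm].
have sx i : s (x i) = lam i *: x (pi i).
  by rewrite sE; have [-> _] := qE i; rewrite (ahomZ hp); have [-> _] := pE i.
have sy i : s (y i) = (lam i)^-1 *: y (pi i).
  by rewrite sE; have [_ ->] := qE i; rewrite (ahomZ hp); have [_ ->] := pE i.
have hs : is_alg_hom s by rewrite (funext sE); exact: ahom_comp.
have pi_id i : pi i = i.
  apply/eqP/negPn/negP => pii; pose mu j : K := if j == i then 2%:R else 1.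
  have mu0 j : mu j != 0 by rewrite /mu; case: ifP; rewrite ?oner_eq0.
  have [t [tT tE]] := torus_exists presA mu0.
  have := s_comm t (prod_set_r (sym_id x y) tT) (x i).
  have [[ht _] _] := tT; have [-> _] := tE i.
  rewrite (ahomZ hs) sx (ahomZ ht); have [-> _] := tE (pi i).
  rewrite /mu eqxx (negbTE pii) !scalerA mulr1.
  move/(scaler_injl (x_neq0 presA (pi i)))/eqP.
  by rewrite mulr_natl mulr2n -subr_eq0 addrK (negbTE (lam0 i)).
have lam_const i : lam i = lam i0.
  have [t [tS tE]] := sym_exists presA (tperm i0 i).
  have := s_comm t (prod_set_l tS (torus_id x y)) (x i0).
  have [[ht _] _] := tS; have [-> _] := tE i0.
  rewrite tpermL !sx !pi_id (ahomZ ht); have [-> _] := tE i0; rewrite tpermL.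
  exact: (scaler_injl (x_neq0 presA i)).
exists (lam i0); split=> // i.
by rewrite sx sy pi_id lam_const.
Qed.

Lemma scalar_torus_central (s : A -> A) (lam : K) : is_autom s -> lam != 0 ->
  (forall i, s (x i) = lam *: x i /\ s (y i) = lam^-1 *: y i) -> in_centre SxT s.
Proof.
move=> aut_s lam0 sE; have [hs _] := aut_s; split.
  by apply: prod_set_r (sym_id x y) _; split=> //; exists (fun _ => lam).
move=> t [p [q [[[hp _] [pi pE]] [[hq _] [mu [_ qE]]] /funext tE]]].
have ht : is_alg_hom t by rewrite tE; exact: ahom_comp.
apply: (ahom_unique presA (ahom_comp hs ht) (ahom_comp ht hs)) => i /=.
have [sx sy] := sE i; have [qx qy] := qE i; have [px py] := pE i.
have [sx' sy'] := sE (pi i).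
rewrite tE sx sy !(ahomZ hq) !(ahomZ hp) qx qy !(ahomZ hp) px py !(ahomZ hs) sx' sy'.
by rewrite !scalerA !(mulrC lam) !(mulrC lam^-1).
Qed.

End Centres.

Theorem corollary5p6 (K : fieldType) (charK0 : [pchar K] =i pred0)
  (n : nat) (n_gt0 : (0 < n)%N)
  (A : algType K) (x y : 'I_n -> A) (presA : jacobson_presentation x y) :
  [/\ (* (1) Z(G_n) = {e} *)
      trivial_centre (@is_autom K A),
      (* (2) Z(T^n ⋉ Inn(S_n)) = {e} *)
      trivial_centre (prod_set (in_torus x y) (@in_inn K A)),
      (* (3) Z(Inn(S_n)) = {e} *)
      trivial_centre (@in_inn K A),
      (* (4) Z(S_n ⋉ T^n) = { t_(lambda,...,lambda) | lambda in K^* } *)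
      (forall s : A -> A,
         in_centre (prod_set (in_sym x y) (in_torus x y)) s <->
         is_autom s /\ exists lam : K, lam != 0 /\
           forall i, s (x i) = lam *: x i /\ s (y i) = lam^-1 *: y i)
    & (* (5) Z(S_n ⋉ Inn(S_n)) = {e} *)
      trivial_centre (prod_set (in_sym x y) (@in_inn K A))].
Proof.
have two_neq0 : 2%:R != 0 :> K by move/pcharf0P: charK0 => ->.
have inner_autom (w w' : A) : w * w' = 1 -> w' * w = 1 -> is_autom (fun a => w * a * w').
  by move=> ww' w'w; apply/inn_autom/inn_conj.
split.
- exact: (trivial_centre_of_inner presA n_gt0 (fun _ => id) (autom_id A) inner_autom).
- exact: (trivial_centre_prod_inn presA n_gt0 (@torus_autom _ _ _ x y) (torus_id x y)).
- exact: (trivial_centre_of_inner presA n_gt0 (@inn_autom K A) (inn_id A) (@inn_conj K A)).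
- move=> s; split; first exact: (central_sym_torus_scalar presA n_gt0 two_neq0).
  by case=> aut_s [lam [lam0 sE]]; exact: (scalar_torus_central presA aut_s lam0 sE).
- exact: (trivial_centre_prod_inn presA n_gt0 (@sym_autom _ _ _ x y) (sym_id x y)).
Qed.
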